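(* Let $f:H\to\mathbb{R}\cup\{+\infty\}$ be proper and lower semicontinuous, and let $(x^k)$ satisfy $\mathbf{H}_1$, $\mathbf{H}_2$, $\mathbf{H}_3$ with $\varepsilon_k=0$ for all $k$. Suppose $(x^k)$ $f$-converges to a point $x^*$ at which $f$ has the K\L{} property with desingularizing function $\varphi(t)=\frac{C}{\theta}t^\theta$, where $C>0$ and $\theta\in]0,1]$. (i) If $\theta=1$ and $\inf_{k}a_kb_{k+1}^2>0$, then there is $K$ with $f(x^K)=f(x^* )$ and $x^k=x^*$ for all $k\ge K$ (finite-time convergence). (ii) If $\theta\in[\frac12,1[$, $\sup_k b_k<+\infty$ and $\inf_k a_kb_{k+1}>0$, there exist $c>0$ and $k_0\in\mathbb{N}$ such that $f(x^k)-f(x^* )=O\Big(\exp\big(-c\sum_{n=k_0}^{k-1}b_{n+1}\big)\Big)$ and $\|x^*-x^k\|=O\Big(\exp\big(-\frac c2\sum_{n=k_0}^{k-2}b_{n+1}\big)\Big)$. (iii) If $\theta\in]0,\frac12[$, $\sup_k b_k<+\infty$ and $\inf_k a_kb_{k+1}>0$, there is $k_0\in\mathbb{N}$ such that $f(x^k)-f(x^* )=O\Big(\big(\sum_{n=k_0}^{k-1}b_{n+1}\big)^{-\frac{1}{1-2\theta}}\Big)$ and $\|x^*-x^k\|=O\Big(\big(\sum_{n=k_0}^{k-2}b_{n+1}\big)^{-\frac{\theta}{1-2\theta}}\Big)$.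
   Context: Subdifferential $\partial f$ (limiting Fréchet subdifferential), lazy slope $\|\partial f(x)\|_-=\inf_{p\in\partial f(x)}\|p\|$ ($+\infty$ if $\partial f(x)=\emptyset$), $f$-convergence: $x^k\to x$ strongly and $f(x^k)\to f(x)$. $f$ has the K\L{} property at $x^*$ with desingularizing $\varphi:[0,\eta[\to[0,\infty[$ if there is $\delta>0$ with $\varphi'(f(x)-f(x^* ))\|\partial f(x)\|_-\ge1$ for all $x$ with $\|x-x^*\|<\delta$ and $f(x^* )<f(x)<f(x^* )+\eta$. $\mathbf{H}_1$: $f(x^{k+1})+a_k\|x^{k+1}-x^k\|^2\le f(x^k)$, $a_k>0$. $\mathbf{H}_2$: $b_{k+1}\|\partial f(x^{k+1})\|_-\le\|x^{k+1}-x^k\|+\varepsilon_{k+1}$, $b_{k+1}>0$. $\mathbf{H}_3$: (i) $a_k\ge\underline a>0$; (ii) $(b_k)\notin\ell^1$; (iii) $\sup_{k\ge1}\frac1{a_kb_k}<\infty$; (iv) $(\varepsilon_k)\in\ell^1$. *)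

From Stdlib Require Import Reals Lra.
Open Scope R_scope.

Record HilbertSpace := {
  hcarrier :> Type;
  hzero : hcarrier;
  hadd : hcarrier -> hcarrier -> hcarrier;
  hopp : hcarrier -> hcarrier;
  hscal : R -> hcarrier -> hcarrier;
  hinner : hcarrier -> hcarrier -> R;
  hadd_assoc : forall x y z, hadd x (hadd y z) = hadd (hadd x y) z;
  hadd_comm : forall x y, hadd x y = hadd y x;
  hadd_zero : forall x, hadd x hzero = x;
  hadd_opp : forall x, hadd x (hopp x) = hzero;
  hscal_one : forall x, hscal 1 x = x;
  hscal_assoc : forall a b x, hscal a (hscal b x) = hscal (a * b) x;
  hscal_distr_l : forall a x y, hscal a (hadd x y) = hadd (hscal a x) (hscal a y);
  hscal_distr_r : forall a b x, hscal (a + b) x = hadd (hscal a x) (hscal b x);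
  hinner_sym : forall x y, hinner x y = hinner y x;
  hinner_add_l : forall x y z, hinner (hadd x y) z = hinner x z + hinner y z;
  hinner_scal_l : forall a x y, hinner (hscal a x) y = a * hinner x y;
  hinner_pos : forall x, 0 <= hinner x x;
  hinner_def : forall x, hinner x x = 0 -> x = hzero;
  hcomplete : forall u : nat -> hcarrier,
    (forall eps, eps > 0 -> exists N, forall m n, (m >= N)%nat -> (n >= N)%nat ->
        sqrt (hinner (hadd (u m) (hopp (u n))) (hadd (u m) (hopp (u n)))) < eps) ->
    exists l, forall eps, eps > 0 -> exists N, forall n, (n >= N)%nat ->
        sqrt (hinner (hadd (u n) (hopp l)) (hadd (u n) (hopp l))) < eps
}.

Arguments hadd {_}. Arguments hopp {_}. Arguments hscal {_}.
Arguments hinner {_}. Arguments hzero {_}.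

Definition hsub {H : HilbertSpace} (x y : H) : H := hadd x (hopp y).
Definition hnorm {H : HilbertSpace} (x : H) : R := sqrt (hinner x x).

Definition hcv {H : HilbertSpace} (u : nat -> H) (l : H) : Prop :=
  forall eps, eps > 0 -> exists N, forall n, (n >= N)%nat -> hnorm (hsub (u n) l) < eps.

Inductive ER := ERfin (r : R) | ERinf.

Definition ER_le (e1 e2 : ER) : Prop :=
  match e1, e2 with
  | _, ERinf => True
  | ERfin r1, ERfin r2 => r1 <= r2
  | ERinf, ERfin _ => False
  end.

Definition R_lt_ER (r : R) (e : ER) : Prop :=
  match e with ERfin s => r < s | ERinf => True end.

Definition ER_addR (e : ER) (r : R) : ER :=
  match e with ERfin s => ERfin (s + r) | ERinf => ERinf end.

Definition proper {H : HilbertSpace} (f : H -> ER) : Prop :=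
  exists x, f x <> ERinf.

Definition lsc {H : HilbertSpace} (f : H -> ER) : Prop :=
  forall x r, R_lt_ER r (f x) ->
    exists delta, delta > 0 /\ forall y, hnorm (hsub y x) < delta -> R_lt_ER r (f y).

(* Fréchet subdifferential: p ∈ ∂̂f(x) iff f(x) finite and
   liminf_{y -> x} (f y - f x - <p, y - x>)/||y - x|| >= 0 *)
Definition frechet_subdiff {H : HilbertSpace} (f : H -> ER) (x p : H) : Prop :=
  exists fx, f x = ERfin fx /\
  forall eps, eps > 0 -> exists delta, delta > 0 /\
    forall y, hnorm (hsub y x) < delta ->
      ER_le (ERfin (fx + hinner p (hsub y x) - eps * hnorm (hsub y x))) (f y).

(* limiting (Fréchet) subdifferential: p ∈ ∂f(x) iff there are x_n -> x with
   f(x_n) -> f(x), p_n ∈ ∂̂f(x_n), p_n -> p *)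
Definition subdiff {H : HilbertSpace} (f : H -> ER) (x p : H) : Prop :=
  exists fx, f x = ERfin fx /\
  exists (xs ps : nat -> H) (fxs : nat -> R),
    hcv xs x /\ hcv ps p /\ Un_cv fxs fx /\
    (forall n, f (xs n) = ERfin (fxs n)) /\
    (forall n, frechet_subdiff f (xs n) (ps n)).

(* lazy slope ||∂f(x)||_- = inf_{p ∈ ∂f(x)} ||p|| (+∞ if empty).
   slope_le f x r  <->  ||∂f(x)||_- <= r
   slope_ge f x r  <->  ||∂f(x)||_- >= r                               *)
Definition slope_le {H : HilbertSpace} (f : H -> ER) (x : H) (r : R) : Prop :=
  forall eps, eps > 0 -> exists p, subdiff f x p /\ hnorm p <= r + eps.

Definition slope_ge {H : HilbertSpace} (f : H -> ER) (x : H) (r : R) : Prop :=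
  forall p, subdiff f x p -> r <= hnorm p.

Definition f_converges {H : HilbertSpace} (f : H -> ER) (u : nat -> H) (xs : H) : Prop :=
  hcv u xs /\
  exists fs, f xs = ERfin fs /\
    forall eps, eps > 0 -> exists N, forall k, (k >= N)%nat ->
      exists v, f (u k) = ERfin v /\ Rabs (v - fs) < eps.

Definition KL_property {H : HilbertSpace} (f : H -> ER) (xs : H)
    (phi : R -> R) (eta : R) : Prop :=
  exists fs, f xs = ERfin fs /\
  exists delta, delta > 0 /\
    forall x v, hnorm (hsub x xs) < delta -> f x = ERfin v ->
      fs < v -> v < fs + eta ->
      exists d, derivable_pt_lim phi (v - fs) d /\
        forall p, subdiff f x p -> 1 <= d * hnorm p.

Definition phi_pow (C theta : R) (t : R) : R :=
  if Rle_dec t 0 then 0 else C / theta * Rpower t theta.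

(* rsum u m n = sum_{i=m}^{n-1} u i  (0 if n <= m) *)
Fixpoint rsum (u : nat -> R) (m n : nat) : R :=
  match n with
  | O => 0
  | S n' => if Nat.leb m n' then rsum u m n' + u n' else 0
  end.

From Stdlib Require Import Reals Lra Psatz Lia Classical.
Open Scope R_scope.

(** Write [r_k = f(x^k) - f(xstar)], which is nonincreasing by H1 and tends to 0.  If it
    vanishes at some step the iterates are stationary at [xstar].  Otherwise, near [xstar], the KL
    inequality and H2 give [b_{k+1} <= C r_{k+1}^(theta-1) |x^{k+1} - x^k|], and with H1 the
    sufficient decrease [r_k - r_{k+1} >= q b_{k+1} r_{k+1}^(2 - 2 theta)].  For [theta = 1] this
    is a fixed decrease per step, impossible for a positive sequence; for [theta >= 1/2] it gives
    [r_{k+1} <= r_k exp(-c b_{k+1})]; for [theta < 1/2] it makes [r_k^(2 theta - 1)] grow by at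
    least [c b_{k+1}] per step.  Distances to [xstar] are bounded by the length of the tail of the
    path, which concavity of [phi] and AM-GM bound by [|x^k - x^{k-1}| + M phi(r_k)]. *)

(** * Hilbert space geometry *)

Section HilbertFacts.
Variable H : HilbertSpace.
Implicit Types x y z u v : H.

Lemma hadd_zero_l x : hadd hzero x = x.
Proof. rewrite hadd_comm; apply hadd_zero. Qed.

Lemma hadd_opp_l x : hadd (hopp x) x = hzero.
Proof. rewrite hadd_comm; apply hadd_opp. Qed.

Lemma hadd_cancel x y z : hadd x y = hadd x z -> y = z.
Proof.
  intro E. rewrite <- (hadd_zero_l y), <- (hadd_zero_l z), <- (hadd_opp_l x).
  rewrite <- !hadd_assoc, E. reflexivity.
Qed.

Lemma hscal0 x : hscal 0 x = hzero.
Proof.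
  apply (hadd_cancel (hscal 0 x)). rewrite hadd_zero, <- hscal_distr_r.
  now rewrite Rplus_0_r.
Qed.

Lemma hopp_scal x : hopp x = hscal (-1) x.
Proof.
  apply (hadd_cancel x). rewrite hadd_opp.
  rewrite <- (hscal_one H x) at 1. rewrite <- hscal_distr_r.
  replace (1 + -1) with 0 by ring. now rewrite hscal0.
Qed.

Lemma hinner_zero_l y : hinner hzero y = 0.
Proof. rewrite <- (hscal0 y), hinner_scal_l. ring. Qed.

Lemma hinner_add_r x y z : hinner x (hadd y z) = hinner x y + hinner x z.
Proof. rewrite hinner_sym, hinner_add_l, (hinner_sym H y), (hinner_sym H z). ring. Qed.

Lemma hinner_scal_r c x y : hinner x (hscal c y) = c * hinner x y.
Proof. rewrite hinner_sym, hinner_scal_l, hinner_sym. ring. Qed.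

Lemma hnorm_nonneg v : 0 <= hnorm v.
Proof. apply sqrt_pos. Qed.

Lemma hnorm_sq v : hnorm v * hnorm v = hinner v v.
Proof. apply sqrt_sqrt, hinner_pos. Qed.

Lemma hnorm_zero : hnorm (@hzero H) = 0.
Proof. unfold hnorm. rewrite hinner_zero_l. apply sqrt_0. Qed.

Lemma hnorm_eq0 v : hnorm v = 0 -> v = hzero.
Proof. intro E. apply hinner_def. rewrite <- hnorm_sq, E. ring. Qed.

Lemma hsub_eq0 x y : hsub x y = hzero -> x = y.
Proof.
  unfold hsub. intro E.
  rewrite <- (hadd_zero H x), <- (hadd_opp_l y), hadd_assoc, E. apply hadd_zero_l.
Qed.

Lemma hnorm_sub_sym x y : hnorm (hsub x y) = hnorm (hsub y x).
Proof.
  assert (E : hsub y x = hscal (-1) (hsub x y)).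
  { unfold hsub. rewrite !hopp_scal, hscal_distr_l, hscal_assoc.
    replace (-1 * -1) with 1 by ring. rewrite hscal_one. apply hadd_comm. }
  unfold hnorm. rewrite E, hinner_scal_l, hinner_scal_r. f_equal. ring.
Qed.

Lemma cauchy_schwarz u v : hinner u v * hinner u v <= hinner u u * hinner v v.
Proof.
  assert (Q : forall t, 0 <= hinner u u + 2 * t * hinner u v + t * t * hinner v v).
  { intro t. pose proof (hinner_pos H (hadd u (hscal t v))) as P.
    rewrite hinner_add_l, !hinner_add_r, !hinner_scal_l, !hinner_scal_r in P.
    rewrite (hinner_sym H v u) in P. nra. }
  pose proof (hinner_pos H v) as Pv.
  destruct (Req_dec (hinner v v) 0) as [Z|Z].
  - apply hinner_def in Z. rewrite Z, (hinner_sym H u hzero), !hinner_zero_l. lra.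
  - (* the discriminant of the quadratic [Q] is nonpositive *)
    specialize (Q (- hinner u v / hinner v v)).
    apply Rmult_le_compat_r with (r := hinner v v) in Q; [|lra].
    field_simplify in Q; [|lra]. nra.
Qed.

Lemma hnorm_triangle u v : hnorm (hadd u v) <= hnorm u + hnorm v.
Proof.
  pose proof (hnorm_nonneg u). pose proof (hnorm_nonneg v).
  assert (CS : hinner u v <= hnorm u * hnorm v).
  { apply Rsqr_incr_0_var; [|apply Rmult_le_pos; auto]. unfold Rsqr.
    pose proof (cauchy_schwarz u v) as cs. rewrite <- !hnorm_sq in cs. nra. }
  apply Rsqr_incr_0_var; [|lra]. unfold Rsqr.
  rewrite hnorm_sq, hinner_add_l, !hinner_add_r, (hinner_sym H v u), <- !hnorm_sq. nra.
Qed.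

Lemma hdist_triangle x y z : hnorm (hsub x z) <= hnorm (hsub x y) + hnorm (hsub y z).
Proof.
  replace (hsub x z) with (hadd (hsub x y) (hsub y z)); [apply hnorm_triangle|].
  unfold hsub. rewrite <- hadd_assoc, (hadd_assoc _ (hopp y)), hadd_opp_l, hadd_zero_l.
  reflexivity.
Qed.

End HilbertFacts.

Lemma rsum_empty (u : nat -> R) m : rsum u m m = 0.
Proof. destruct m; [reflexivity|]. cbn [rsum]. now rewrite (proj2 (Nat.leb_gt (S m) m)) by lia. Qed.

Lemma rsum_Sr (u : nat -> R) m n : (m <= n)%nat -> rsum u m (S n) = rsum u m n + u n.
Proof. intro h. cbn [rsum]. now rewrite (proj2 (Nat.leb_le m n) h). Qed.

Lemma rsum_pos (u : nat -> R) m n : (forall j, 0 < u j) -> (m < n)%nat -> 0 < rsum u m n.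
Proof.
  intros hu hn. induction hn as [|n hn IH].
  - rewrite rsum_Sr, rsum_empty by lia. now rewrite Rplus_0_l.
  - rewrite rsum_Sr by lia. specialize (hu n). lra.
Qed.

Lemma rsum_le_telescope (u g : nat -> R) (c : R) k0 :
  (forall j, (k0 <= j)%nat -> c * u j <= g (S j) - g j) ->
  forall k, (k0 <= k)%nat -> c * rsum u k0 k <= g k - g k0.
Proof.
  intros hu k hk. induction hk as [|k hk IH].
  - rewrite rsum_empty. lra.
  - rewrite rsum_Sr, Rmult_plus_distr_l by exact hk. specialize (hu k hk). lra.
Qed.

Definition step_length {H : HilbertSpace} (x : nat -> H) (k : nat) : R :=
  hnorm (hsub (x (S k)) (x k)).

Lemma dist_le_rsum_step_length (H : HilbertSpace) (x : nat -> H) (l : H) k k' :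
  (k <= k')%nat -> hnorm (hsub l (x k)) <= rsum (step_length x) k k' + hnorm (hsub l (x k')).
Proof.
  intro hk. induction hk as [|k' hk IH].
  - rewrite rsum_empty. lra.
  - rewrite rsum_Sr by exact hk.
    pose proof (hdist_triangle H l (x (S k')) (x k')). unfold step_length at 2. lra.
Qed.

Lemma hcv_dist_le_of_rsum_le (H : HilbertSpace) (x : nat -> H) (l : H) k D :
  hcv x l -> (forall k', (k <= k')%nat -> rsum (step_length x) k k' <= D) ->
  hnorm (hsub l (x k)) <= D.
Proof.
  intros hcvx hD. apply Rle_plus_epsilon. intros eps he.
  destruct (hcvx eps he) as [N HN].
  pose proof (dist_le_rsum_step_length H x l k (max k N) ltac:(lia)).
  pose proof (hD (max k N) ltac:(lia)). specialize (HN (max k N) ltac:(lia)).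
  rewrite hnorm_sub_sym in HN. lra.
Qed.

(** * Real analysis *)

Lemma exp_le (x y : R) : x <= y -> exp x <= exp y.
Proof. intro h. destruct (Req_dec x y) as [->|]; [lra|]. left; apply exp_increasing; lra. Qed.

Lemma ln_le (x y : R) : 0 < x -> x <= y -> ln x <= ln y.
Proof. intros. destruct (Req_dec x y) as [->|]; [lra|]. left; apply ln_increasing; lra. Qed.

Lemma Rpower_pos (x y : R) : 0 < Rpower x y.
Proof. apply exp_pos. Qed.

Lemma Rpower_le_base_nonpos (x y e : R) : 0 < y <= x -> e <= 0 -> Rpower x e <= Rpower y e.
Proof.
  intros. replace e with (- - e) by ring. rewrite (Rpower_Ropp x), (Rpower_Ropp y).
  apply Rinv_le_contravar; [apply Rpower_pos|]. apply Rle_Rpower_l; lra.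
Qed.

Lemma Rpower_le_exponent_le1 (r p q : R) : 0 < r <= 1 -> q <= p -> Rpower r p <= Rpower r q.
Proof.
  intros. unfold Rpower. apply exp_le.
  assert (ln r <= 0) by (rewrite <- ln_1; apply ln_le; lra). nra.
Qed.

Lemma Rpower_mvt (p x y : R) : 0 < y < x ->
  exists c, y < c < x /\ Rpower x p - Rpower y p = p * Rpower c (p - 1) * (x - y).
Proof.
  intros hyx.
  destruct (MVT_cor2 (fun t => Rpower t p) (fun t => p * Rpower t (p - 1)) y x)
    as [c [hc1 hc2]]; [lra| |].
  - intros c hc. apply derivable_pt_lim_power. lra.
  - exists c. split; [exact hc2|exact hc1].
Qed.

Lemma Rpower_tangent_le (p x y : R) : 0 <= p <= 1 -> 0 < y <= x ->
  p * Rpower x (p - 1) * (x - y) <= Rpower x p - Rpower y p.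
Proof.
  intros hp hyx. destruct (Req_dec y x) as [->|]; [lra|].
  destruct (Rpower_mvt p x y) as [c [hc ->]]; [lra|].
  apply Rmult_le_compat_r; [lra|]. apply Rmult_le_compat_l; [lra|].
  apply Rpower_le_base_nonpos; lra.
Qed.

Lemma Rpower_tangent_ge (p x y : R) : p <= 0 -> 0 < y <= x ->
  Rpower x p - Rpower y p <= p * Rpower x (p - 1) * (x - y).
Proof.
  intros hp hyx. destruct (Req_dec y x) as [->|]; [lra|].
  destruct (Rpower_mvt p x y) as [c [hc ->]]; [lra|].
  apply Rmult_le_compat_r; [lra|]. apply Rmult_le_compat_neg_l; [lra|].
  apply Rpower_le_base_nonpos; lra.
Qed.

Lemma ln_1_plus_ge (y : R) : 0 <= y -> y / (1 + y) <= ln (1 + y).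
Proof.
  intro hy. pose proof (exp_ineq1_le (- (y / (1 + y)))) as h.
  replace (1 + - (y / (1 + y))) with (/ (1 + y)) in h by (field; lra).
  apply ln_le in h; [|apply Rinv_0_lt_compat; lra].
  rewrite ln_exp, ln_Rinv in h by lra. lra.
Qed.

Lemma am_gm_le (x y z : R) : 0 <= x -> 0 <= z -> y ^ 2 <= x * z -> 2 * y <= x + z.
Proof.
  intros hx hz h. destruct (Rle_dec (2 * y) (x + z)) as [|n]; [auto|].
  pose proof (pow2_ge_0 (x - z)). nra.
Qed.

Lemma phi_pow_pos (C th t : R) : 0 < t -> phi_pow C th t = C / th * Rpower t th.
Proof. intro h. unfold phi_pow. destruct (Rle_dec t 0); lra. Qed.

Lemma phi_pow_nonneg (C th t : R) : 0 <= C -> 0 < th -> 0 <= phi_pow C th t.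
Proof.
  intros. unfold phi_pow. destruct (Rle_dec t 0); [lra|].
  apply Rmult_le_pos; [apply Rmult_le_pos; [lra|left; apply Rinv_0_lt_compat; lra]|left; apply Rpower_pos].
Qed.

Lemma phi_pow_derivative (C th t d : R) : th <> 0 -> 0 < t ->
  derivable_pt_lim (phi_pow C th) t d -> d = C * Rpower t (th - 1).
Proof.
  intros hth ht hd.
  assert (hg : derivable_pt_lim (fun u => C / th * Rpower u th) t (C / th * (th * Rpower t (th - 1)))).
  { apply (derivable_pt_lim_scal (fun u => Rpower u th)), derivable_pt_lim_power, ht. }
  replace (C * Rpower t (th - 1)) with (C / th * (th * Rpower t (th - 1))) by (field; auto).
  apply (uniqueness_limite (phi_pow C th) t); [exact hd|].
  (* [phi_pow C th] agrees with [C / th * Rpower _ th] on the neighbourhood ]0, 2t[ of [t] *)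
  intros eps heps. destruct (hg eps heps) as [del hdel].
  assert (hm : 0 < Rmin del t) by (apply Rmin_pos; [apply cond_pos|auto]).
  exists (mkposreal _ hm). intros h hh0 hh. simpl in hh.
  pose proof (Rmin_l del t). pose proof (Rmin_r del t). apply Rabs_def2 in hh as hh'.
  rewrite !phi_pow_pos by lra. apply hdel; [exact hh0|lra].
Qed.

Lemma negpow_increment (s q B beta r0 r1 : R) :
  0 < s -> 0 < q -> 0 < beta <= B -> 0 < r1 <= r0 -> r0 <= 1 ->
  q * beta * Rpower r1 (1 + s) <= r0 - r1 ->
  Rmin (/ (2 * B)) (s * q * Rpower 2 (- ((1 + s) / s))) * beta
    <= Rpower r1 (- s) - Rpower r0 (- s).
Proof.
  intros hs hq hb hr hr0 hstep.
  assert (hg0 : 1 <= Rpower r0 (- s)).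
  { rewrite <- (Rpower_O r0) by lra. apply Rpower_le_exponent_le1; lra. }
  destruct (Rle_dec (2 * Rpower r0 (- s)) (Rpower r1 (- s))) as [big|small].
  - apply Rle_trans with (/ (2 * B) * beta); [apply Rmult_le_compat_r; [lra|apply Rmin_l]|].
    assert (/ (2 * B) * beta <= 1).
    { apply (Rmult_le_reg_l (2 * B)); [lra|].
      replace (2 * B * (/ (2 * B) * beta)) with beta by (field; lra). lra. }
    lra.
  - (* now [r1 > 2^(-1/s) r0], so the tangent of [t^(-s)] at [r0] controls the increment *)
    assert (hlog : s * (ln r0 - ln r1) < ln 2).
    { apply Rnot_le_lt in small. unfold Rpower in small.
      rewrite <- (exp_ln 2), <- exp_plus in small by lra. apply exp_lt_inv in small. lra. }
    assert (hratio : Rpower 2 (- ((1 + s) / s)) <= Rpower r0 (- s - 1) * Rpower r1 (1 + s)).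
    { unfold Rpower. rewrite <- exp_plus. apply exp_le.
      replace (- ((1 + s) / s) * ln 2) with ((1 + s) * - (ln 2 / s)) by (field; lra).
      assert (ln r0 - ln r1 < ln 2 / s).
      { apply (Rmult_lt_reg_l s); [lra|]. replace (s * (ln 2 / s)) with (ln 2) by (field; lra). lra. }
      nra. }
    pose proof (Rpower_tangent_ge (- s) r0 r1 ltac:(lra) hr) as tangent.
    pose proof (Rpower_pos 2 (- ((1 + s) / s))).
    pose proof (Rpower_pos r0 (- s - 1)). pose proof (Rpower_pos r1 (1 + s)).
    apply Rle_trans with (s * q * Rpower 2 (- ((1 + s) / s)) * beta);
      [apply Rmult_le_compat_r; [lra|apply Rmin_r]|].
    apply Rle_trans with (s * Rpower r0 (- s - 1) * (q * beta * Rpower r1 (1 + s))).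
    + replace (s * Rpower r0 (- s - 1) * (q * beta * Rpower r1 (1 + s)))
        with (s * q * beta * (Rpower r0 (- s - 1) * Rpower r1 (1 + s))) by ring.
      replace (s * q * Rpower 2 (- ((1 + s) / s)) * beta)
        with (s * q * beta * Rpower 2 (- ((1 + s) / s))) by ring.
      apply Rmult_le_compat_l; [|exact hratio]. apply Rmult_le_pos; [|lra]. nra.
    + apply Rle_trans with (s * Rpower r0 (- s - 1) * (r0 - r1)); [|lra].
      apply Rmult_le_compat_l; [nra|exact hstep].
Qed.

Lemma Rpower_le_of_mul_le_negpow (rho c S s p : R) :
  0 < rho -> 0 < c -> 0 < S -> 0 < s -> 0 <= p ->
  c * S <= Rpower rho (- s) -> Rpower rho p <= Rpower c (- (p / s)) * Rpower S (- (p / s)).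
Proof.
  intros hr hc hS hs hp h. rewrite Rpower_mult_distr by lra.
  replace (Rpower rho p) with (Rpower (Rpower rho (- s)) (- (p / s))).
  - apply Rpower_le_base_nonpos; [split; [nra|exact h]|].
    assert (0 <= p / s) by (apply Rmult_le_pos; [lra|left; apply Rinv_0_lt_compat; lra]). lra.
  - rewrite Rpower_mult. f_equal. field. lra.
Qed.

Lemma Rpower_half_le_exp (rho R0 c S : R) : 0 < rho -> 0 < R0 ->
  rho <= R0 * exp (- c * S) -> Rpower rho (/ 2) <= sqrt R0 * exp (- (c / 2) * S).
Proof.
  intros hr hR h. pose proof (exp_pos (- c * S)).
  apply Rle_trans with (Rpower (R0 * exp (- c * S)) (/ 2)); [apply Rle_Rpower_l; lra|].
  rewrite <- Rpower_mult_distr, Rpower_sqrt by lra. right. f_equal.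
  unfold Rpower. rewrite ln_exp. f_equal. field.
Qed.

(** * Rates under the KL inequality *)

(* [r k] plays the role of [f(x^k) - f(xstar)] and [nd k] of [|x^{k+1} - x^k|]; the fields are
   what H1, H2 and the KL inequality yield once the iterates stay in the KL neighbourhood. *)
Record kl_descent (r nd a b : nat -> R) (C theta : R) (k1 : nat) : Prop := {
  descent_pos : forall k, (k1 <= k)%nat -> 0 < r k;
  descent_le_1 : forall k, (k1 <= k)%nat -> r k <= 1;
  descent_decrease : forall j, (k1 <= j)%nat -> a j * nd j ^ 2 <= r j - r (S j);
  descent_kl : forall j, (k1 <= j)%nat -> b (S j) <= C * Rpower (r (S j)) (theta - 1) * nd j }.

Arguments descent_pos {r nd a b C theta k1}.
Arguments descent_le_1 {r nd a b C theta k1}.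
Arguments descent_decrease {r nd a b C theta k1}.
Arguments descent_kl {r nd a b C theta k1}.

Section KLDescentRates.
Variables (r nd a b : nat -> R) (C theta : R) (k1 : nat).
Hypotheses (HC : 0 < C) (Htheta : 0 < theta <= 1).
Hypotheses (Ha : forall k, 0 < a k) (Hb : forall k, 0 < b (S k)) (Hnd : forall k, 0 <= nd k).
Hypothesis Hreg : kl_descent r nd a b C theta k1.

Lemma kl_descent_nonincreasing j : (k1 <= j)%nat -> r (S j) <= r j.
Proof.
  intro hj. pose proof (descent_decrease Hreg j hj). pose proof (Ha j).
  pose proof (pow2_ge_0 (nd j)). nra.
Qed.

Lemma kl_descent_rate_step m j : (k1 <= j)%nat -> m <= a j * b (S j) ->
  m / C ^ 2 * b (S j) * Rpower (r (S j)) (2 - 2 * theta) <= r j - r (S j).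
Proof.
  intros hj hm.
  pose proof (descent_pos Hreg (S j) ltac:(lia)) as hr.
  set (P := Rpower (r (S j)) (theta - 1)). set (Q := Rpower (r (S j)) (2 - 2 * theta)).
  assert (hPQ : P * P * Q = 1).
  { unfold P, Q. rewrite <- !Rpower_plus. replace (_ + _ + _) with 0 by ring. now apply Rpower_O. }
  assert (hP : 0 < P) by apply Rpower_pos. assert (hQ : 0 < Q) by apply Rpower_pos.
  pose proof (descent_kl Hreg j hj) as hkl. fold P in hkl.
  pose proof (descent_decrease Hreg j hj) as hdec.
  pose proof (Hb j). pose proof (Ha j). pose proof (Hnd j).
  assert (hb2 : b (S j) * b (S j) <= C * C * (P * P) * nd j ^ 2).
  { replace (C * C * (P * P) * nd j ^ 2) with ((C * P * nd j) * (C * P * nd j)) by ring.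
    apply Rmult_le_compat; lra. }
  assert (key : m * b (S j) * Q <= C ^ 2 * (r j - r (S j))).
  { apply Rle_trans with (a j * Q * (b (S j) * b (S j))).
    - replace (m * b (S j) * Q) with (m * (b (S j) * Q)) by ring.
      replace (a j * Q * (b (S j) * b (S j))) with (a j * b (S j) * (b (S j) * Q)) by ring.
      apply Rmult_le_compat_r; [nra|lra].
    - apply Rle_trans with (C ^ 2 * (a j * nd j ^ 2) * (P * P * Q)).
      + replace (C ^ 2 * (a j * nd j ^ 2) * (P * P * Q))
          with (a j * Q * (C * C * (P * P) * nd j ^ 2)) by ring.
        apply Rmult_le_compat_l; [nra|exact hb2].
      + rewrite hPQ, Rmult_1_r. apply Rmult_le_compat_l; [nra|exact hdec]. }
  apply (Rmult_le_reg_l (C ^ 2)); [nra|].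
  replace (C ^ 2 * (m / C ^ 2 * b (S j) * Q)) with (m * b (S j) * Q) by (field; lra).
  exact key.
Qed.

Lemma kl_descent_theta1_absurd m : theta = 1 -> 0 < m ->
  (forall k, m <= a k * b (S k) ^ 2) -> False.
Proof.
  intros hth hm Hm. set (d := m / C ^ 2).
  assert (hd : 0 < d) by (unfold d; apply Rdiv_lt_0_compat; nra).
  (* with [theta = 1] the KL inequality reads [b <= C * nd], so [r] drops by at least [d] per step *)
  assert (step : forall j, (k1 <= j)%nat -> d <= r j - r (S j)).
  { intros j hj. pose proof (descent_kl Hreg j hj) as hkl.
    rewrite hth, Rminus_diag, Rpower_O, Rmult_1_r in hkl by (apply (descent_pos Hreg); lia).
    pose proof (descent_decrease Hreg j hj). pose proof (Hm j). pose proof (Ha j). pose proof (Hb j).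
    assert (b (S j) ^ 2 <= C ^ 2 * nd j ^ 2) by nra.
    unfold d. apply (Rmult_le_reg_l (C ^ 2)); [nra|].
    replace (C ^ 2 * (m / C ^ 2)) with m by (field; lra). nra. }
  assert (lin : forall k, (k1 <= k)%nat -> r k <= r k1 - INR (k - k1) * d).
  { intros k hk. induction hk as [|k hk IH].
    - rewrite Nat.sub_diag. simpl. lra.
    - rewrite Nat.sub_succ_l, S_INR by exact hk. specialize (step k hk). lra. }
  destruct (archimed_cor1 d hd) as [N [hN hN0]].
  assert (1 < INR N * d).
  { apply (Rmult_lt_reg_l (/ INR N)); [apply Rinv_0_lt_compat, lt_0_INR; lia|].
    rewrite <- Rmult_assoc, Rinv_l, Rmult_1_l, Rmult_1_r by (apply not_0_INR; lia). exact hN. }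
  specialize (lin (k1 + N)%nat ltac:(lia)). replace (k1 + N - k1)%nat with N in lin by lia.
  pose proof (descent_pos Hreg (k1 + N)%nat ltac:(lia)). pose proof (descent_le_1 Hreg k1 (le_n _)).
  lra.
Qed.

Lemma kl_descent_exp_rate B m : / 2 <= theta -> 0 < m ->
  (forall k, b (S k) <= B) -> (forall k, m <= a k * b (S k)) ->
  exists c, 0 < c /\ forall k, (k1 <= k)%nat ->
    r k <= r k1 * exp (- c * rsum (fun n => b (S n)) k1 k).
Proof.
  intros hth hm HB Hm.
  set (q := m / C ^ 2). assert (hq : 0 < q) by (unfold q; apply Rdiv_lt_0_compat; nra).
  assert (hB : 0 < B) by (pose proof (HB O); pose proof (Hb O); lra).
  set (c := q / (1 + q * B)).
  exists c. split; [unfold c; apply Rdiv_lt_0_compat; nra|].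
  assert (step : forall j, (k1 <= j)%nat -> c * b (S j) <= - ln (r (S j)) - - ln (r j)).
  { intros j hj.
    pose proof (kl_descent_rate_step m j hj (Hm j)) as hrate. fold q in hrate.
    pose proof (descent_pos Hreg (S j) ltac:(lia)) as hr1.
    assert (hpow : r (S j) <= Rpower (r (S j)) (2 - 2 * theta)).
    { rewrite <- (Rpower_1 (r (S j))) at 1 by lra.
      apply Rpower_le_exponent_le1; [split; [lra|apply (descent_le_1 Hreg); lia]|lra]. }
    pose proof (Hb j) as hbj. pose proof (HB j) as hbB.
    assert (hmul : r (S j) * (1 + q * b (S j)) <= r j).
    { assert (q * b (S j) * r (S j) <= q * b (S j) * Rpower (r (S j)) (2 - 2 * theta))
        by (apply Rmult_le_compat_l; nra).
      lra. }
    assert (0 < 1 + q * b (S j)) by nra.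
    apply ln_le in hmul; [|apply Rmult_lt_0_compat; lra]. rewrite ln_mult in hmul by lra.
    pose proof (ln_1_plus_ge (q * b (S j)) ltac:(nra)) as hln.
    assert (c * b (S j) <= q * b (S j) / (1 + q * b (S j))).
    { unfold c, Rdiv. rewrite Rmult_assoc, (Rmult_comm (/ _)), <- Rmult_assoc.
      apply Rmult_le_compat_l; [nra|]. apply Rinv_le_contravar; nra. }
    lra. }
  intros k hk.
  pose proof (rsum_le_telescope (fun n => b (S n)) (fun j => - ln (r j)) c k1 step k hk) as ht.
  pose proof (descent_pos Hreg k hk). pose proof (descent_pos Hreg k1 (le_n _)).
  rewrite <- (exp_ln (r k)), <- (exp_ln (r k1)), <- exp_plus by lra. apply exp_le. lra.
Qed.

Lemma kl_descent_power_rate B m : theta < / 2 -> 0 < m ->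
  (forall k, b (S k) <= B) -> (forall k, m <= a k * b (S k)) ->
  exists c, 0 < c /\ forall k, (k1 <= k)%nat ->
    c * rsum (fun n => b (S n)) k1 k <= Rpower (r k) (- (1 - 2 * theta)).
Proof.
  intros hth hm HB Hm.
  set (q := m / C ^ 2). assert (hq : 0 < q) by (unfold q; apply Rdiv_lt_0_compat; nra).
  assert (hB : 0 < B) by (pose proof (HB O); pose proof (Hb O); lra).
  set (s := 1 - 2 * theta). assert (hs : 0 < s) by (unfold s; lra).
  set (c := Rmin (/ (2 * B)) (s * q * Rpower 2 (- ((1 + s) / s)))).
  exists c. split.
  { unfold c. apply Rmin_pos; [apply Rinv_0_lt_compat; lra|].
    pose proof (Rpower_pos 2 (- ((1 + s) / s))). apply Rmult_lt_0_compat; nra. }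
  assert (step : forall j, (k1 <= j)%nat -> c * b (S j) <= Rpower (r (S j)) (- s) - Rpower (r j) (- s)).
  { intros j hj.
    pose proof (kl_descent_rate_step m j hj (Hm j)) as hrate. fold q in hrate.
    replace (2 - 2 * theta) with (1 + s) in hrate by (unfold s; ring).
    apply (negpow_increment s q B); [lra|lra| | | |exact hrate].
    - split; [apply Hb|apply HB].
    - split; [apply (descent_pos Hreg); lia|apply kl_descent_nonincreasing, hj].
    - apply (descent_le_1 Hreg), hj. }
  intros k hk.
  pose proof (rsum_le_telescope (fun n => b (S n)) (fun j => Rpower (r j) (- s)) c k1 step k hk).
  pose proof (Rpower_pos (r k1) (- s)). lra.
Qed.

Variable M : R.
Hypothesis HM : forall k, / (a (S k) * b (S k)) <= M.

Lemma kl_descent_M_pos : 0 < M.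
Proof.
  eapply Rlt_le_trans; [|apply (HM O)].
  apply Rinv_0_lt_compat, Rmult_lt_0_compat; [apply Ha|apply Hb].
Qed.

Lemma kl_descent_chain j : (k1 <= j)%nat ->
  2 * nd (S j) <= nd j + M * (phi_pow C theta (r (S j)) - phi_pow C theta (r (S (S j)))).
Proof.
  intro hj.
  pose proof (descent_pos Hreg (S (S j)) ltac:(lia)) as hr2.
  pose proof (kl_descent_nonincreasing (S j) ltac:(lia)) as hr12.
  set (D := C * Rpower (r (S j)) (theta - 1)).
  assert (hD : 0 < D) by (apply Rmult_lt_0_compat; [lra|apply Rpower_pos]).
  set (dphi := phi_pow C theta (r (S j)) - phi_pow C theta (r (S (S j)))).
  assert (hconc : D * (r (S j) - r (S (S j))) <= dphi).
  { unfold dphi, D. rewrite !phi_pow_pos by lra.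
    pose proof (Rpower_tangent_le theta (r (S j)) (r (S (S j))) ltac:(lra) ltac:(lra)) as t.
    apply Rle_trans with (C / theta * (theta * Rpower (r (S j)) (theta - 1) * (r (S j) - r (S (S j))))).
    - right. field. lra.
    - rewrite <- Rmult_minus_distr_l. apply Rmult_le_compat_l; [|exact t].
      apply Rmult_le_pos; [lra|left; apply Rinv_0_lt_compat; lra]. }
  pose proof (descent_kl Hreg j hj) as hkl. fold D in hkl.
  pose proof (descent_decrease Hreg (S j) ltac:(lia)) as hdec.
  pose proof (Ha (S j)). pose proof (Hb j). pose proof (Hnd j). pose proof (Hnd (S j)).
  assert (hprod : a (S j) * b (S j) * nd (S j) ^ 2 <= nd j * dphi).
  { apply Rle_trans with (D * nd j * (a (S j) * nd (S j) ^ 2)).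
    - replace (a (S j) * b (S j) * nd (S j) ^ 2) with (b (S j) * (a (S j) * nd (S j) ^ 2)) by ring.
      apply Rmult_le_compat_r; [nra|exact hkl].
    - apply Rle_trans with (nd j * (D * (r (S j) - r (S (S j))))).
      + replace (D * nd j * (a (S j) * nd (S j) ^ 2)) with (nd j * (D * (a (S j) * nd (S j) ^ 2))) by ring.
        apply Rmult_le_compat_l; [lra|]. apply Rmult_le_compat_l; lra.
      + apply Rmult_le_compat_l; lra. }
  assert (hdphi : 0 <= dphi) by nra.
  pose proof kl_descent_M_pos.
  apply am_gm_le; [lra|nra|].
  replace (nd (S j) ^ 2) with (/ (a (S j) * b (S j)) * (a (S j) * b (S j) * nd (S j) ^ 2)) by (field; lra).
  apply Rle_trans with (/ (a (S j) * b (S j)) * (nd j * dphi)).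
  - apply Rmult_le_compat_l; [left; apply Rinv_0_lt_compat; nra|exact hprod].
  - replace (nd j * (M * dphi)) with (M * (nd j * dphi)) by ring.
    apply Rmult_le_compat_r; [nra|exact (HM j)].
Qed.

Lemma kl_descent_tail_length i k : (k1 <= i)%nat -> (S i <= k)%nat ->
  rsum nd (S i) k <= nd i + M * phi_pow C theta (r (S i)).
Proof.
  intros hi hk.
  set (G := fun j => nd (pred j) + M * phi_pow C theta (r j)).
  assert (step : forall j, (S i <= j)%nat -> 1 * nd j <= - G (S j) - - G j).
  { intros [|j] hj; [lia|]. unfold G. simpl pred.
    pose proof (kl_descent_chain j ltac:(lia)). lra. }
  pose proof (rsum_le_telescope nd (fun j => - G j) 1 (S i) step k hk) as ht.
  assert (0 <= G k).
  { unfold G. pose proof (Hnd (pred k)). pose proof kl_descent_M_pos.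
    pose proof (phi_pow_nonneg C theta (r k) ltac:(lra) ltac:(lra)). nra. }
  cbv beta in ht. change (G (S i)) with (nd i + M * phi_pow C theta (r (S i))) in ht. lra.
Qed.

Lemma kl_descent_tail_pow_bound alow p i : 0 < alow -> (forall k, alow <= a k) ->
  0 < p <= / 2 -> p <= theta -> (k1 <= i)%nat ->
  nd i + M * phi_pow C theta (r (S i)) <= (/ sqrt alow + M * (C / theta)) * Rpower (r i) p.
Proof.
  intros halow Halow hp hpt hi.
  pose proof (descent_pos Hreg i hi) as hri. pose proof (descent_pos Hreg (S i) ltac:(lia)).
  pose proof (descent_le_1 Hreg i hi). pose proof (kl_descent_nonincreasing i hi).
  assert (hnd : nd i <= / sqrt alow * Rpower (r i) p).
  { apply Rle_trans with (sqrt (r i / alow)).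
    - apply Rsqr_incr_0_var; [|apply sqrt_pos]. unfold Rsqr.
      rewrite sqrt_sqrt by (apply Rmult_le_pos; [lra|left; apply Rinv_0_lt_compat; lra]).
      apply (Rmult_le_reg_l alow); [lra|]. replace (alow * (r i / alow)) with (r i) by (field; lra).
      pose proof (descent_decrease Hreg i hi). pose proof (Halow i). pose proof (Hnd i). nra.
    - rewrite sqrt_div_alt, <- Rpower_sqrt by lra. unfold Rdiv. rewrite Rmult_comm.
      apply Rmult_le_compat_l; [left; apply Rinv_0_lt_compat, sqrt_lt_R0; lra|].
      apply Rpower_le_exponent_le1; lra. }
  assert (hphi : phi_pow C theta (r (S i)) <= C / theta * Rpower (r i) p).
  { rewrite phi_pow_pos by lra.
    apply Rmult_le_compat_l; [apply Rmult_le_pos; [lra|left; apply Rinv_0_lt_compat; lra]|].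
    apply Rle_trans with (Rpower (r i) theta).
    - apply Rle_Rpower_l; lra.
    - apply Rpower_le_exponent_le1; lra. }
  pose proof kl_descent_M_pos.
  assert (M * phi_pow C theta (r (S i)) <= M * (C / theta * Rpower (r i) p))
    by (apply Rmult_le_compat_l; lra).
  lra.
Qed.

End KLDescentRates.

(** * The iterates *)

(* [er_val] is only applied to finite values of [f]; the junk value of [ERinf] is never used. *)
Definition er_val (e : ER) : R := match e with ERfin v => v | ERinf => 0 end.

Section Iterates.
Variables (H : HilbertSpace) (f : H -> ER) (x : nat -> H) (a b : nat -> R) (xstar : H) (fs : R).
Hypothesis Ha_pos : forall k, 0 < a k.
Hypothesis H1 : forall k,
  ER_le (ER_addR (f (x (S k))) (a k * (hnorm (hsub (x (S k)) (x k)))^2)) (f (x k)).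
Hypothesis H2 : forall k, slope_le f (x (S k)) (hnorm (hsub (x (S k)) (x k)) / b (S k)).
Hypothesis Hfcv : f_converges f x xstar.
Hypothesis Hfs : f xstar = ERfin fs.

Local Notation fval k := (er_val (f (x k))).

Lemma iterate_value_finite k : (1 <= k)%nat -> f (x k) = ERfin (fval k).
Proof.
  intro hk. destruct k as [|k]; [lia|].
  (* [H2] provides a subgradient at [x (S k)], so [f] is finite there *)
  destruct (H2 k 1 ltac:(lra)) as [p [[v [Ev _]] _]]. now rewrite Ev.
Qed.

Lemma iterate_value_decrease k : (1 <= k)%nat ->
  fval (S k) + a k * step_length x k ^ 2 <= fval k.
Proof.
  intro hk. specialize (H1 k).
  rewrite (iterate_value_finite (S k)), (iterate_value_finite k) in H1 by lia. exact H1.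
Qed.

Lemma iterate_value_cv eps : eps > 0 ->
  exists N, forall k, (N <= k)%nat -> Rabs (fval k - fs) < eps.
Proof.
  intro he. destruct Hfcv as [_ [fs' [Efs' Hcv]]]. rewrite Hfs in Efs'. injection Efs' as <-.
  destruct (Hcv eps he) as [N HN]. exists N. intros k hk.
  destruct (HN k hk) as [v [Ev Hv]]. now rewrite Ev.
Qed.

Lemma iterate_value_nonincreasing k k' : (1 <= k)%nat -> (k <= k')%nat -> fval k' <= fval k.
Proof.
  intros hk hk'. induction hk' as [|k' hk' IH]; [lra|].
  pose proof (iterate_value_decrease k' ltac:(lia)). pose proof (Ha_pos k').
  pose proof (pow2_ge_0 (step_length x k')). nra.
Qed.

Lemma iterate_value_ge_limit k : (1 <= k)%nat -> fs <= fval k.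
Proof.
  intro hk. apply Rnot_lt_le. intro hlt.
  destruct (iterate_value_cv (fs - fval k) ltac:(lra)) as [N HN].
  specialize (HN (max k N) ltac:(lia)). apply Rabs_def2 in HN.
  pose proof (iterate_value_nonincreasing k (max k N) hk ltac:(lia)). lra.
Qed.

Lemma iterates_stationary K : (1 <= K)%nat -> fval K = fs ->
  forall k, (K <= k)%nat -> x k = xstar /\ f (x k) = ERfin fs.
Proof.
  intros hK hfK.
  assert (hval : forall k, (K <= k)%nat -> fval k = fs).
  { intros k hk. pose proof (iterate_value_nonincreasing K k hK hk).
    pose proof (iterate_value_ge_limit k ltac:(lia)). lra. }
  assert (hconst : forall k, (K <= k)%nat -> x k = x K).
  { intros k hk. induction hk as [|k hk IH]; [reflexivity|]. rewrite <- IH.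
    apply hsub_eq0, hnorm_eq0.
    pose proof (iterate_value_decrease k ltac:(lia)) as hdec.
    rewrite (hval k hk), (hval (S k) ltac:(lia)) in hdec. unfold step_length in hdec.
    assert (hsq : hnorm (hsub (x (S k)) (x k)) ^ 2 <= 0).
    { apply (Rmult_le_reg_l (a k)); [apply Ha_pos|lra]. }
    pose proof (hnorm_nonneg H (hsub (x (S k)) (x k))). apply Rle_antisym; nra. }
  assert (hxK : x K = xstar).
  { apply hsub_eq0, hnorm_eq0, Rle_antisym; [|apply hnorm_nonneg].
    apply Rle_plus_epsilon. intros eps he. destruct Hfcv as [Hx _].
    destruct (Hx eps he) as [N HN]. specialize (HN (max K N) ltac:(lia)).
    rewrite hconst in HN by lia. lra. }
  intros k hk. rewrite iterate_value_finite, hval, hconst by lia. now split.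
Qed.

Lemma iterates_stationary_or_strict :
  (exists K, forall k, (K <= k)%nat -> x k = xstar /\ f (x k) = ERfin fs) \/
  (forall k, (1 <= k)%nat -> fs < fval k).
Proof.
  destruct (classic (exists K, (1 <= K)%nat /\ fval K = fs)) as [[K [hK hfK]]|hno].
  - left. exists K. exact (iterates_stationary K hK hfK).
  - right. intros k hk. destruct (iterate_value_ge_limit k hk) as [|e]; [auto|].
    exfalso. apply hno. eauto.
Qed.

Lemma stationary_rates (E1 E2 : nat -> R) :
  (exists K, forall k, (K <= k)%nat -> x k = xstar /\ f (x k) = ERfin fs) ->
  (exists M K, forall k, (k >= K)%nat -> exists v, f (x k) = ERfin v /\ Rabs (v - fs) <= M * E1 k) /\
  (exists M K, forall k, (k >= K)%nat -> hnorm (hsub xstar (x k)) <= M * E2 k).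
Proof.
  intros [K HK]. split; exists 0, K; intros k hk; destruct (HK k hk) as [Ex Ef].
  - exists fs. split; [exact Ef|]. rewrite Rminus_diag, Rabs_R0, Rmult_0_l. lra.
  - rewrite Ex. unfold hsub. rewrite hadd_opp, hnorm_zero, Rmult_0_l. lra.
Qed.

Variables (C theta eta : R).
Hypotheses (HC : 0 < C) (Htheta : 0 < theta <= 1).
Hypothesis Hb_pos : forall k, (k >= 1)%nat -> 0 < b k.
Hypothesis Heta : 0 < eta.
Hypothesis HKL : KL_property f xstar (phi_pow C theta) eta.

Lemma iterates_kl_descent : (forall k, (1 <= k)%nat -> fs < fval k) ->
  exists k1, (1 <= k1)%nat /\ kl_descent (fun k => fval k - fs) (step_length x) a b C theta k1.
Proof.
  intro hstrict.
  destruct HKL as [fs' [Efs' [delta [hdelta HKLx]]]]. rewrite Hfs in Efs'. injection Efs' as <-.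
  destruct Hfcv as [Hx _]. destruct (Hx delta hdelta) as [N1 HN1].
  destruct (iterate_value_cv (Rmin eta 1)) as [N2 HN2].
  { apply Rmin_pos; lra. }
  pose proof (Rmin_l eta 1). pose proof (Rmin_r eta 1).
  exists (max 1 (max N1 N2)). split; [lia|]. constructor; cbv beta.
  - intros k hk. pose proof (hstrict k ltac:(lia)). lra.
  - intros k hk. specialize (HN2 k ltac:(lia)). apply Rabs_def2 in HN2. lra.
  - intros j hj. pose proof (iterate_value_decrease j ltac:(lia)). lra.
  - intros j hj. set (v := fval (S j)).
    assert (hv : fs < v < fs + eta).
    { pose proof (hstrict (S j) ltac:(lia)). specialize (HN2 (S j) ltac:(lia)).
      apply Rabs_def2 in HN2. unfold v. lra. }
    pose proof (HN1 (S j) ltac:(lia)) as hxj.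
    pose proof (iterate_value_finite (S j) ltac:(lia)) as hfj. fold v in hfj.
    destruct (HKLx (x (S j)) v hxj hfj (proj1 hv) (proj2 hv)) as [d [hd hdp]].
    apply phi_pow_derivative in hd; [|apply Rgt_not_eq; lra|lra]. subst d.
    set (D := C * Rpower (v - fs) (theta - 1)).
    assert (hD : 0 < D) by (apply Rmult_lt_0_compat; [lra|apply Rpower_pos]).
    pose proof (Hb_pos (S j) ltac:(lia)).
    assert (hslope : 1 <= D * (step_length x j / b (S j))).
    { apply Rle_plus_epsilon. intros eps he.
      destruct (H2 j (eps / D)) as [p [hp hpn]]; [apply Rdiv_lt_0_compat; lra|].
      apply Rle_trans with (D * hnorm p); [exact (hdp p hp)|].
      replace (D * (step_length x j / b (S j)) + eps)
        with (D * (step_length x j / b (S j) + eps / D)) by (field; lra).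
      apply Rmult_le_compat_l; [lra|exact hpn]. }
    replace (D * step_length x j) with (D * (step_length x j / b (S j)) * b (S j)) by (field; lra).
    nra.
Qed.

Hypothesis H3i : exists alow, 0 < alow /\ forall k, alow <= a k.
Hypothesis H3iii : exists M, forall k, (k >= 1)%nat -> / (a k * b k) <= M.

Lemma iterates_dist_le_pow k1 p :
  kl_descent (fun k => fval k - fs) (step_length x) a b C theta k1 ->
  0 < p <= / 2 -> p <= theta ->
  exists K0, 0 < K0 /\ forall i, (k1 <= i)%nat ->
    hnorm (hsub xstar (x (S i))) <= K0 * Rpower (fval i - fs) p.
Proof.
  intros Hreg hp hpt.
  destruct H3i as [alow [halow Halow]]. destruct H3iii as [M HM].
  assert (HM' : forall k, / (a (S k) * b (S k)) <= M) by (intro k; apply HM; lia).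
  assert (Hb : forall k, 0 < b (S k)) by (intro k; apply Hb_pos; lia).
  assert (Hnd : forall k, 0 <= step_length x k) by (intro k; apply hnorm_nonneg).
  assert (hM : 0 < M) by (eapply kl_descent_M_pos; eauto).
  exists (/ sqrt alow + M * (C / theta)). split.
  { assert (0 < / sqrt alow) by (apply Rinv_0_lt_compat, sqrt_lt_R0, halow).
    assert (0 < M * (C / theta)) by (apply Rmult_lt_0_compat; [lra|apply Rdiv_lt_0_compat; lra]).
    lra. }
  intros i hi.
  apply Rle_trans with (step_length x i + M * phi_pow C theta (fval (S i) - fs)).
  - destruct Hfcv as [Hx _]. apply hcv_dist_le_of_rsum_le; [exact Hx|].
    intros k hk. exact (kl_descent_tail_length _ _ _ _ _ _ _ HC Htheta Ha_pos Hb Hnd Hreg M HM' i k hi hk).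
  - exact (kl_descent_tail_pow_bound _ _ _ _ _ _ _ HC Htheta Ha_pos Hb Hnd Hreg M HM' alow p i
             halow Halow hp hpt hi).
Qed.

Lemma finite_termination : theta = 1 ->
  (exists m, 0 < m /\ forall k, m <= a k * (b (S k))^2) ->
  exists K, f (x K) = f xstar /\ forall k, (k >= K)%nat -> x k = xstar.
Proof.
  intros hth [m [hm Hm]].
  destruct iterates_stationary_or_strict as [[K HK]|hstrict].
  - exists K. split; [rewrite Hfs; exact (proj2 (HK K (le_n K)))|intros k hk; apply HK; lia].
  - exfalso. destruct (iterates_kl_descent hstrict) as [k1 [_ Hreg]].
    assert (Hb : forall k, 0 < b (S k)) by (intro k; apply Hb_pos; lia).
    exact (kl_descent_theta1_absurd _ _ _ _ _ _ _ HC Ha_pos Hb Hreg m hth hm Hm).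
Qed.

Lemma linear_rate : 1/2 <= theta < 1 -> (exists B, forall k, (k >= 1)%nat -> b k <= B) ->
  (exists m, 0 < m /\ forall k, m <= a k * b (S k)) ->
  exists c k0, 0 < c /\
    (exists M K, forall k, (k >= K)%nat -> exists v, f (x k) = ERfin v /\
        Rabs (v - fs) <= M * exp (- c * rsum (fun n => b (S n)) k0 k)) /\
    (exists M K, forall k, (k >= K)%nat ->
        hnorm (hsub xstar (x k)) <= M * exp (- (c / 2) * rsum (fun n => b (S n)) k0 (k - 1))).
Proof.
  intros hth [B HB] [m [hm Hm]].
  destruct iterates_stationary_or_strict as [hstat|hstrict].
  { exists 1, O. split; [lra|]. apply stationary_rates, hstat. }
  destruct (iterates_kl_descent hstrict) as [k1 [hk1 Hreg]].
  assert (Hb : forall k, 0 < b (S k)) by (intro k; apply Hb_pos; lia).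
  assert (HB' : forall k, b (S k) <= B) by (intro k; apply HB; lia).
  assert (Hnd : forall k, 0 <= step_length x k) by (intro k; apply hnorm_nonneg).
  destruct (kl_descent_exp_rate _ _ _ _ _ _ _ HC Ha_pos Hb Hnd Hreg B m ltac:(lra) hm HB' Hm)
    as [c [hc Hrate]].
  destruct (iterates_dist_le_pow k1 (/ 2) Hreg ltac:(lra) ltac:(lra)) as [K0 [hK0 Hdist]].
  pose proof (hstrict k1 hk1).
  exists c, k1. split; [exact hc|]. split.
  - exists (fval k1 - fs), k1. intros k hk. exists (fval k). split; [apply iterate_value_finite; lia|].
    rewrite Rabs_pos_eq by (pose proof (hstrict k ltac:(lia)); lra). exact (Hrate k hk).
  - exists (K0 * sqrt (fval k1 - fs)), (S k1). intros [|i] hi; [lia|].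
    replace (S i - 1)%nat with i by lia. rewrite Rmult_assoc.
    apply Rle_trans with (K0 * Rpower (fval i - fs) (/ 2)); [apply Hdist; lia|].
    apply Rmult_le_compat_l; [lra|].
    apply Rpower_half_le_exp; [pose proof (hstrict i ltac:(lia)); lra|lra|apply Hrate; lia].
Qed.

Lemma sublinear_rate : 0 < theta < 1/2 -> (exists B, forall k, (k >= 1)%nat -> b k <= B) ->
  (exists m, 0 < m /\ forall k, m <= a k * b (S k)) ->
  exists k0,
    (exists M K, forall k, (k >= K)%nat -> exists v, f (x k) = ERfin v /\
        Rabs (v - fs) <= M * Rpower (rsum (fun n => b (S n)) k0 k) (- (1 / (1 - 2 * theta)))) /\
    (exists M K, forall k, (k >= K)%nat ->
        hnorm (hsub xstar (x k)) <= M * Rpower (rsum (fun n => b (S n)) k0 (k - 1)) (- (theta / (1 - 2 * theta)))).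
Proof.
  intros hth [B HB] [m [hm Hm]].
  destruct iterates_stationary_or_strict as [hstat|hstrict].
  { exists O. apply stationary_rates, hstat. }
  destruct (iterates_kl_descent hstrict) as [k1 [hk1 Hreg]].
  assert (Hb : forall k, 0 < b (S k)) by (intro k; apply Hb_pos; lia).
  assert (HB' : forall k, b (S k) <= B) by (intro k; apply HB; lia).
  assert (Hnd : forall k, 0 <= step_length x k) by (intro k; apply hnorm_nonneg).
  destruct (kl_descent_power_rate _ _ _ _ _ _ _ HC Ha_pos Hb Hnd Hreg B m ltac:(lra) hm HB' Hm)
    as [c [hc Hrate]].
  destruct (iterates_dist_le_pow k1 theta Hreg ltac:(lra) ltac:(lra)) as [K0 [hK0 Hdist]].
  set (s := 1 - 2 * theta). assert (hs : 0 < s) by (unfold s; lra).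
  assert (hpow : forall k p, (k1 < k)%nat -> 0 <= p -> Rpower (fval k - fs) p <=
            Rpower c (- (p / s)) * Rpower (rsum (fun n => b (S n)) k1 k) (- (p / s))).
  { intros k p hk hp. pose proof (hstrict k ltac:(lia)).
    apply Rpower_le_of_mul_le_negpow; [lra|lra|apply rsum_pos; auto|lra|lra|apply Hrate; lia]. }
  exists k1. split.
  - exists (Rpower c (- (1 / s))), (S k1). intros k hk. exists (fval k).
    pose proof (hstrict k ltac:(lia)).
    split; [apply iterate_value_finite; lia|]. rewrite Rabs_pos_eq by lra.
    rewrite <- (Rpower_1 (fval k - fs)) by lra. apply hpow; lia || lra.
  - exists (K0 * Rpower c (- (theta / s))), (S (S k1)). intros [|i] hi; [lia|].
    replace (S i - 1)%nat with i by lia. rewrite Rmult_assoc.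
    apply Rle_trans with (K0 * Rpower (fval i - fs) theta); [apply Hdist; lia|].
    apply Rmult_le_compat_l; [lra|]. apply hpow; lia || lra.
Qed.

End Iterates.

Theorem mainTheorem5
  (H : HilbertSpace) (f : H -> ER) (x : nat -> H) (a b : nat -> R)
  (xstar : H) (C theta eta : R)
  (Hproper : proper f) (Hlsc : lsc f)
  (* H1 *)
  (Ha_pos : forall k, 0 < a k)
  (H1 : forall k, ER_le (ER_addR (f (x (S k))) (a k * (hnorm (hsub (x (S k)) (x k)))^2)) (f (x k)))
  (* H2 with eps_k = 0 *)
  (Hb_pos : forall k, (k >= 1)%nat -> 0 < b k)
  (H2 : forall k, slope_le f (x (S k)) (hnorm (hsub (x (S k)) (x k)) / b (S k)))
  (* H3 *)
  (H3i : exists alow, 0 < alow /\ forall k, alow <= a k)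
  (H3ii : ~ exists l, Un_cv (fun n => rsum b 1 n) l)
  (H3iii : exists M, forall k, (k >= 1)%nat -> / (a k * b k) <= M)
  (* f-convergence and KL *)
  (Hfcv : f_converges f x xstar)
  (HC : 0 < C) (Htheta : 0 < theta <= 1) (Heta : 0 < eta)
  (HKL : KL_property f xstar (phi_pow C theta) eta) :
  forall fs, f xstar = ERfin fs ->
  (* (i) *)
  ((theta = 1 -> (exists m, 0 < m /\ forall k, m <= a k * (b (S k))^2) ->
      exists K, f (x K) = f xstar /\ forall k, (k >= K)%nat -> x k = xstar)
  /\
  (* (ii) *)
  (1/2 <= theta < 1 -> (exists B, forall k, (k >= 1)%nat -> b k <= B) ->
      (exists m, 0 < m /\ forall k, m <= a k * b (S k)) ->
      exists c k0, 0 < c /\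
        (exists M K, forall k, (k >= K)%nat -> exists v, f (x k) = ERfin v /\
            Rabs (v - fs) <= M * exp (- c * rsum (fun n => b (S n)) k0 k)) /\
        (exists M K, forall k, (k >= K)%nat ->
            hnorm (hsub xstar (x k)) <= M * exp (- (c / 2) * rsum (fun n => b (S n)) k0 (k - 1))))
  /\
  (* (iii) *)
  (0 < theta < 1/2 -> (exists B, forall k, (k >= 1)%nat -> b k <= B) ->
      (exists m, 0 < m /\ forall k, m <= a k * b (S k)) ->
      exists k0,
        (exists M K, forall k, (k >= K)%nat -> exists v, f (x k) = ERfin v /\
            Rabs (v - fs) <= M * Rpower (rsum (fun n => b (S n)) k0 k) (- (1 / (1 - 2 * theta)))) /\
        (exists M K, forall k, (k >= K)%nat ->
            hnorm (hsub xstar (x k)) <= M * Rpower (rsum (fun n => b (S n)) k0 (k - 1)) (- (theta / (1 - 2 * theta)))))).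
Proof.
  intros fs Hfs. split; [|split].
  - exact (finite_termination H f x a b xstar fs Ha_pos H1 H2 Hfcv Hfs
             C theta eta HC Htheta Hb_pos Heta HKL).
  - exact (linear_rate H f x a b xstar fs Ha_pos H1 H2 Hfcv Hfs
             C theta eta HC Htheta Hb_pos Heta HKL H3i H3iii).
  - exact (sublinear_rate H f x a b xstar fs Ha_pos H1 H2 Hfcv Hfs
             C theta eta HC Htheta Hb_pos Heta HKL H3i H3iii).
Qed.
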